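(* Let $A,B\in\mathbb{C}^{n\times n}$ and let $C=A+B$. If $C$ is nonderogatory, then \[\frac{n-d(A)}{\operatorname{rank}(B)+1}\leq|\Lambda(A)|\leq n-d(A).\]
   Context: For $M\in\mathbb{C}^{n\times n}$, $\Lambda(M)$ denotes the set of distinct eigenvalues of $M$ and $|\cdot|$ the cardinality of a set. For $\lambda\in\Lambda(M)$, $m_a(M,\lambda)$ is its algebraic multiplicity and $m_g(M,\lambda)$ its geometric multiplicity. The defectivity of $M$ is $d(M):=\sum_{\lambda\in\Lambda(M)}\big(m_a(M,\lambda)-m_g(M,\lambda)\big)$. $M$ is called nonderogatory if $m_g(M,\lambda)=1$ for every $\lambda\in\Lambda(M)$. *)

From HB Require Import structures.
From mathcomp Require Import all_boot all_order all_algebra.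
From mathcomp Require Import complex.
From Stdlib Require Rdefinitions.
From mathcomp Require Import Rstruct.

Set Implicit Arguments. Unset Strict Implicit. Unset Printing Implicit Defensive.
Import Order.TTheory GRing.Theory Num.Theory.
Local Open Scope ring_scope.

Definition Cplx : numClosedFieldType := complex Rdefinitions.R.

Section Spectral.
Variable F : closedFieldType.
Variable n : nat.

(* Λ(M): the distinct eigenvalues of M, as a duplicate-free list: the
   distinct roots of the characteristic polynomial (which splits). *)
Definition spectrum (M : 'M[F]_n) : seq F :=
  undup (sval (closed_field_poly_normal (char_poly M))).

Definition num_eigs (M : 'M[F]_n) : nat := size (spectrum M).

Definition alg_mult (M : 'M[F]_n) (lam : F) : nat := mup lam (char_poly M).

Definition geo_mult (M : 'M[F]_n) (lam : F) : nat := \rank (eigenspace M lam).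

Definition defectivity (M : 'M[F]_n) : nat :=
  \sum_(lam <- spectrum M) (alg_mult M lam - geo_mult M lam).

Definition nonderogatory (M : 'M[F]_n) : Prop :=
  forall lam, lam \in spectrum M -> geo_mult M lam = 1%N.

End Spectral.

(** For every eigenvalue [lam] of [A], the eigenvectors of [A] for [lam]
   lying in [ker B] are eigenvectors of [C = A + B]; as [C] is nonderogatory
   this intersection has dimension at most one, so the geometric multiplicity
   of [lam] for [A] lies between [1] and [rank B + 1].  Since the algebraic
   multiplicities add up to [n], the sum of the geometric multiplicities is
   [n - d(A)], which is therefore squeezed between [|Λ(A)|] and
   [|Λ(A)| (rank B + 1)]. *)

From mathcomp Require Import all_boot all_order all_algebra.
From mathcomp Require Import zify.
Set Implicit Arguments. Unset Strict Implicit. Unset Printing Implicit Defensive.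
Import Order.TTheory GRing.Theory Num.Theory.
Local Open Scope ring_scope.

Lemma sum_count_mem_undup (T : eqType) (r : seq T) :
  (\sum_(x <- undup r) count_mem x r)%N = size r.
Proof.
rewrite -(perm_size (perm_count_undup r)) size_flatten /shape -map_comp.
by rewrite sumnE big_map; apply: eq_bigr => x _; rewrite /= size_nseq.
Qed.

Section Multiplicities.
Variables (F : closedFieldType) (n : nat).
Implicit Types (M A B : 'M[F]_n) (lam : F).

Definition char_poly_roots M : seq F :=
  sval (closed_field_poly_normal (char_poly M)).

Lemma char_poly_rootsE M :
  char_poly M = \prod_(z <- char_poly_roots M) ('X - z%:P).
Proof.
rewrite /char_poly_roots; case: closed_field_poly_normal => r /= ->.
by rewrite (monicP (char_poly_monic M)) scale1r.
Qed.

Lemma size_char_poly_roots M : size (char_poly_roots M) = n.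
Proof.
by have := size_char_poly M; rewrite char_poly_rootsE size_prod_XsubC => -[].
Qed.

Lemma alg_multE M lam : alg_mult M lam = count_mem lam (char_poly_roots M).
Proof. by rewrite /alg_mult char_poly_rootsE mu_prod_XsubC. Qed.

Lemma mem_spectrum M lam : (lam \in spectrum M) = eigenvalue M lam.
Proof.
rewrite mem_undup eigenvalue_root_char -/(char_poly_roots M).
by rewrite char_poly_rootsE root_prod_XsubC.
Qed.

Lemma alg_mult_gt0 M lam : lam \in spectrum M -> (0 < alg_mult M lam)%N.
Proof. by rewrite alg_multE mem_undup -has_pred1 has_count. Qed.

Lemma geo_mult_gt0 M lam : lam \in spectrum M -> (0 < geo_mult M lam)%N.
Proof. by rewrite mem_spectrum lt0n mxrank_eq0. Qed.

Lemma sum_alg_mult M : (\sum_(lam <- spectrum M) alg_mult M lam)%N = n.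
Proof.
under eq_bigr => lam _ do rewrite alg_multE.
by rewrite sum_count_mem_undup size_char_poly_roots.
Qed.

Lemma nonderogatory_geo_mult_le1 M lam :
  nonderogatory M -> (geo_mult M lam <= 1)%N.
Proof.
move=> ndM; have [/ndM -> //|] := boolP (lam \in spectrum M).
by rewrite mem_spectrum negbK /geo_mult => /eqP ->; rewrite mxrank0.
Qed.

Lemma geo_mult_addr_le A B lam :
  (geo_mult A lam <= geo_mult (A + B) lam + \rank B)%N.
Proof.
rewrite /geo_mult; set K := eigenspace A lam.
have capK_sub : (K :&: kermx B <= eigenspace (A + B) lam)%MS.
  apply/eigenspaceP; rewrite mulmxDr.
  have /eigenspaceP -> := capmxSl K (kermx B).
  by have /sub_kermxP -> := capmxSr K (kermx B); rewrite addr0.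
have := mxrank_sum_cap K (kermx B); rewrite mxrank_ker.
have := rank_leq_col (K + kermx B)%MS; have := rank_leq_row B.
by have := mxrankS capK_sub; lia.
Qed.

Lemma nonderogatory_add_geo_mult_le A B lam :
  nonderogatory (A + B) -> (geo_mult A lam <= \rank B + 1)%N.
Proof.
move=> ndAB; have := nonderogatory_geo_mult_le1 lam ndAB.
by have := geo_mult_addr_le A B lam; lia.
Qed.

(* [defectivity] uses truncated subtraction, so neither of the two bounds
   below needs [geo_mult M lam <= alg_mult M lam]. *)
Lemma defectivity_num_eigs_le M : (defectivity M + num_eigs M <= n)%N.
Proof.
rewrite /num_eigs -[X in (_ <= X)%N](sum_alg_mult M) -sum1_size -big_split /=.
rewrite big_seq [X in (_ <= X)%N]big_seq; apply: leq_sum => lam lamM.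
have := alg_mult_gt0 lamM; have := geo_mult_gt0 lamM; lia.
Qed.

Lemma defectivity_num_eigs_ge M k :
  (forall lam, lam \in spectrum M -> (geo_mult M lam <= k)%N) ->
  (n <= defectivity M + num_eigs M * k)%N.
Proof.
move=> geo_le_k; rewrite -[X in (X <= _)%N](sum_alg_mult M).
have -> : (num_eigs M * k = \sum_(lam <- spectrum M) k)%N.
  by rewrite big_const_seq count_predT iter_addn_0 mulnC.
rewrite -big_split /= big_seq [X in (_ <= X)%N]big_seq.
apply: leq_sum => lam lamM; have := geo_le_k _ lamM; lia.
Qed.

End Multiplicities.

Theorem corollary4p3 (n : nat) (A B : 'M[Cplx]_n) :
  nonderogatory (A + B) ->
  ((n%:R - (defectivity A)%:R) / ((\rank B)%:R + 1) <= (num_eigs A)%:R :> rat)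
  /\ ((num_eigs A)%:R <= n%:R - (defectivity A)%:R :> rat).
Proof.
move=> ndC.
have geo_le lam : lam \in spectrum A -> (geo_mult A lam <= \rank B + 1)%N.
  move=> _; exact: (@nonderogatory_add_geo_mult_le _ _ A B lam ndC).
have lower := defectivity_num_eigs_ge geo_le.
have upper := defectivity_num_eigs_le A.
split.
  rewrite ler_pdivrMr ?ltr_wpDl // lerBlDl.
  by rewrite -[1]/(1%:R) -natrD -natrM -natrD ler_nat.
by rewrite lerBrDr -natrD ler_nat addnC.
Qed.
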